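(* There is a deterministic algorithm ($1$-Cover) which, given $n \ge 81$ elements, makes at most $3 n^{3/2}$ comparisons and outputs a $1$-max-set of size at most $\sqrt{n}$.
   Context: Model of imprecise comparisons: there are $n$ elements, each with a fixed unknown real value; we identify an element with its value. Asked to compare $x_i$ and $x_j$, the comparator answers either ''$x_i \ge x_j$'' or ''$x_j \ge x_i$''. If $|x_i-x_j|>1$ the answer is correct; if $|x_i-x_j|\le 1$ the answer is arbitrary (possibly adversarial and adaptive). Let $x^*$ be the maximum value of an input element. A $k$-max-set is a subset of the input elements containing at least one element of value at least $x^*-k$. Bounds on comparisons are worst case over inputs and comparator behaviours, and the guarantee must hold for all of them. *)

From HB Require Import structures.
From mathcomp Require Import all_boot all_order all_algebra.
From mathcomp Require Import reals.
Set Implicit Arguments. Unset Strict Implicit. Unset Printing Implicit Defensive.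
Import Order.TTheory GRing.Theory Num.Theory.
Local Open Scope ring_scope.

(* A deterministic comparison algorithm on n elements (indexed by 'I_n) is a
   finite decision tree: either it stops and outputs a subset of the elements,
   or it compares x_i and x_j and continues in the first subtree if the answer
   is "x_i >= x_j" and in the second if the answer is "x_j >= x_i". *)
Inductive dtree (n : nat) : Type :=
  | Leaf of {set 'I_n}
  | Query of 'I_n & 'I_n & dtree n & dtree n.

(* run x T c S : with values x, some (possibly adversarial, adaptive) behaviour
   of the imprecise comparator leads T to output S after exactly c comparisons. *)
Inductive run (R : realType) (n : nat) (x : 'I_n -> R)
  : dtree n -> nat -> {set 'I_n} -> Prop :=
  | run_leaf (S : {set 'I_n}) : run x (Leaf S) 0 S
  | run_ge (i j : 'I_n) (tl tr : dtree n) (c : nat) (S : {set 'I_n}) :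
      ~ (1 < `|x i - x j| /\ x i < x j) ->
      run x tl c S -> run x (Query i j tl tr) c.+1 S
  | run_le (i j : 'I_n) (tl tr : dtree n) (c : nat) (S : {set 'I_n}) :
      ~ (1 < `|x i - x j| /\ x j < x i) ->
      run x tr c S -> run x (Query i j tl tr) c.+1 S.

Definition is_kmaxset (R : realType) (n : nat) (x : 'I_n -> R) (k : R)
  (S : {set 'I_n}) : Prop :=
  exists2 i, i \in S & forall j : 'I_n, x j - k <= x i.

From HB Require Import structures.
From mathcomp Require Import all_boot all_order all_algebra.
From mathcomp Require Import reals zify lra.
From Stdlib Require PeanoNat.
Import Order.TTheory GRing.Theory Num.Theory.

Set Implicit Arguments. Unset Strict Implicit. Unset Printing Implicit Defensive.

(* 1-Cover keeps a set C of candidates, initially all elements.  A round takes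
   the first 2h candidates, plays a round robin among them, outputs the player
   w with most wins and discards w together with every player w beat.  Since w
   beat at least half of the others, the q(q-1)/2 comparisons of a round of q
   players are at most (2h-2) per discarded candidate, hence (2h-2)n in total;
   and a round discards about h candidates, so h ~ 3 sqrt(n)/2 leaves at most
   sqrt(n) rounds.  The maximum stays a candidate until it is discarded, which
   only happens when it loses to w, and then w is within 1 of it. *)

Section Rounds.

Variable h : nat.

(* [rounds h m] bounds the number of rounds started with [m] candidates: a
   round of [q = minn h.*2 m] players discards at least [q %/ 2 + 1] of them. *)
Definition shrink (m : nat) : nat := m - minn h.*2 m %/ 2 - 1.

Fixpoint rounds_fuel (fuel m : nat) : nat :=
  if fuel is f.+1 then (if m is 0 then 0 else (rounds_fuel f (shrink m)).+1) else 0.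

Definition rounds (m : nat) : nat := rounds_fuel m m.

Lemma rounds_fuel_enough f1 f2 m :
  m <= f1 -> m <= f2 -> rounds_fuel f1 m = rounds_fuel f2 m.
Proof.
elim: f1 f2 m => [|f1 IH] [|f2] [|m] //= m_f1 m_f2; try lia.
by congr S; apply: IH; rewrite /shrink; lia.
Qed.

Lemma roundsE m : 0 < m -> rounds m = (rounds (shrink m)).+1.
Proof.
by case: m => // m _; congr S; apply: rounds_fuel_enough; rewrite /shrink; lia.
Qed.

Lemma leq_shrink m1 m2 : m1 <= m2 -> shrink m1 <= shrink m2.
Proof. by rewrite /shrink; lia. Qed.

Lemma leq_rounds m1 m2 : m1 <= m2 -> rounds m1 <= rounds m2.
Proof.
elim/ltn_ind: m2 m1 => m2 IH [|m1] le_m12; first by [].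
rewrite (@roundsE m1.+1 isT) (@roundsE m2) ?ltnS; last lia.
by apply: IH; [rewrite /shrink; lia | exact: leq_shrink].
Qed.

Lemma exp2_rounds_small m : m < h.*2 -> 2 ^ rounds m <= m.+1.
Proof.
elim/ltn_ind: m => -[|m] IH small //.
rewrite roundsE // expnS.
have := IH (shrink m.+1) ltac:(rewrite /shrink; lia) ltac:(rewrite /shrink; lia).
rewrite /shrink; lia.
Qed.

Lemma rounds_linear m : 0 < h -> h.+1 * rounds m <= m + h.+1 * rounds h.*2.-1.
Proof.
move=> h_gt0; elim/ltn_ind: m => m IH.
case: (ltnP m h.*2) => [small|big].
  by have := @leq_rounds m h.*2.-1 ltac:(lia); nia.
rewrite roundsE; last lia.
have := IH (shrink m) ltac:(rewrite /shrink; lia).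
rewrite mulnS /shrink; have -> : minn h.*2 m = h.*2 by lia.
lia.
Qed.

End Rounds.

Definition half_block (s : nat) : nat := (3 * s + 2) %/ 2.

Lemma exp2_gt_linear L : 10 <= L -> 9 * L + 8 < 2 ^ L.
Proof.
elim: L => // L IH; rewrite leq_eqVlt => /predU1P [<- // | L_ge10].
by have := IH L_ge10; rewrite expnS; lia.
Qed.

Lemma rounds_half_block_large s m :
  30 <= s -> m <= s * s + 2 * s -> rounds (half_block s) m <= s.
Proof.
move=> s_ge30 m_le; set h := half_block s.
have [h_gt0 h_lb h_ub] : [/\ 0 < h, 3 * s + 1 <= h.*2 & h.*2 <= 3 * s + 2].
  by rewrite /h /half_block; split; lia.
set b := rounds h h.*2.-1.
have tail : 2 ^ b <= h.*2.
  by have := @exp2_rounds_small h h.*2.-1; rewrite prednK; [apply; lia | lia].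
have b_le : 3 * b + 3 <= s.
  rewrite leqNgt; apply/negP => b_big.
  by have := @exp2_gt_linear b ltac:(lia); lia.
rewrite leqNgt; apply/negP => too_many.
have lin := @rounds_linear h m h_gt0; rewrite -/b in lin.
have : h.+1 * s.+1 <= s * s + 2 * s + h.+1 * b.
  apply: leq_trans (leq_trans _ lin) _; first by rewrite leq_mul2l too_many orbT.
  by rewrite leq_add2r.
nia.
Qed.

(* [rounds_half_block_large] needs [30 <= s]; the finitely many smaller cases
   are checked by evaluation. *)
Definition rounds_half_block_ok (s : nat) : bool :=
  all (fun m => rounds (half_block s) m <= s) (iota (s * s) (2 * s + 1)).

Lemma rounds_half_block_small : all rounds_half_block_ok (iota 9 21).
Proof. by vm_compute. Qed.

Lemma rounds_half_block s m :
  9 <= s -> s * s <= m <= s * s + 2 * s -> rounds (half_block s) m <= s.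
Proof.
move=> s_ge9 /andP [m_ge m_le]; case: (ltnP s 30) => [s_lt30 | s_ge30].
  have /allP /(_ s) := rounds_half_block_small; rewrite mem_iota => /(_ ltac:(lia)).
  by move=> /allP /(_ m); rewrite mem_iota; apply; lia.
exact: rounds_half_block_large.
Qed.

Section Tournament.

Variables (T : finType) (Q : {set T}) (r : rel T).

Definition out_nbhd (u : T) : {set T} := [set v in Q | r u v].

Lemma card_out_nbhd u : #|out_nbhd u| = \sum_(v in Q) r u v.
Proof. by rewrite -sum1dep_card big_mkcondr. Qed.

Lemma card_arcs :
  #|[set p : T * T | [&& p.1 \in Q, p.2 \in Q & r p.1 p.2]]| =
  \sum_(u in Q) #|out_nbhd u|.
Proof.
transitivity (\sum_(u in Q) \sum_(v | (v \in Q) && r u v) 1).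
  by rewrite pair_big_dep sum1dep_card.
by apply: eq_bigr => u _; rewrite sum1dep_card.
Qed.

Hypothesis r_tournament : {in Q &, forall u v, r u v + r v u = (u != v)}.

Lemma sum_card_out_nbhd : 2 * \sum_(u in Q) #|out_nbhd u| = #|Q| * #|Q|.-1.
Proof.
under eq_bigr do rewrite card_out_nbhd.
rewrite mul2n -addnn {2}(exchange_big _ _ _ _ _ (fun u v => r u v : nat)).
rewrite -big_split.
rewrite -sum_nat_const; apply: eq_bigr => u u_Q /=.
rewrite -big_split /= (eq_bigr (fun v => (u != v) : nat)) => [|v v_Q]; last first.
  exact: r_tournament.
transitivity #|[set v in Q | u != v]|; first by rewrite -sum1dep_card big_mkcondr.
by rewrite (cardsD1 u Q) u_Q add1n; apply: eq_card => v; rewrite !inE eq_sym andbC.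
Qed.

Lemma tournament_max_outdegree w :
  w \in Q -> {in Q, forall u, #|out_nbhd u| <= #|out_nbhd w|} ->
  #|Q|.-1 <= 2 * #|out_nbhd w|.
Proof.
move=> w_Q w_max; have Q_gt0 : 0 < #|Q| by apply/card_gt0P; exists w.
rewrite -(leq_pmul2l Q_gt0) -sum_card_out_nbhd mulnCA leq_mul2l.
by rewrite -sum_nat_const leq_sum ?orbT.
Qed.

End Tournament.

Section Algorithm.

Variable n : nat.
Implicit Types (C Q S : {set 'I_n}) (won : {set 'I_n * 'I_n}).

Definition ordered_pairs Q : seq ('I_n * 'I_n) :=
  enum [set p : 'I_n * 'I_n | [&& p.1 \in Q, p.2 \in Q & (p.1 < p.2)%N]].

(* [won] collects the pairs [p] whose comparison was answered "x_p.1 >= x_p.2". *)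
Fixpoint play (ps : seq ('I_n * 'I_n)) (k : {set 'I_n * 'I_n} -> dtree n) : dtree n :=
  if ps is p :: ps' then
    Query p.1 p.2 (play ps' (fun won => k (p |: won))) (play ps' k)
  else k set0.

Definition beats won (u v : 'I_n) : bool :=
  if (u < v)%N then (u, v) \in won else if (v < u)%N then (v, u) \notin won else false.

Definition front h C : {set 'I_n} := [set z in take h.*2 (enum C)].

(* The fuel only ensures termination: [#|C| <= fuel] suffices, as every round
   discards a candidate. *)
Fixpoint cover_loop (h fuel : nat) C S : dtree n :=
  if fuel is f.+1 then
    let Q := front h C in
    if [pick z in Q] is Some z0 then
      play (ordered_pairs Q) (fun won =>
        let w := [arg max_(u > z0 in Q) #|out_nbhd Q (beats won) u|] in
        cover_loop h f (C :\: (w |: out_nbhd Q (beats won) w)) (w |: S))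
    else Leaf S
  else Leaf S.

Lemma ltn_ord_tournament (u v : 'I_n) : ((u < v)%N + (v < u)%N = (u != v))%N.
Proof. by rewrite -val_eqE; case: ltngtP. Qed.

Lemma beats_tournament won u v : (beats won u v + beats won v u = (u != v))%N.
Proof.
by rewrite /beats -val_eqE; case: ltngtP => //= _; case: (_ \in won).
Qed.

Lemma size_ordered_pairs Q : 2 * size (ordered_pairs Q) = #|Q| * #|Q|.-1.
Proof.
rewrite /ordered_pairs -cardE (card_arcs Q (fun u v : 'I_n => (u < v)%N)).
by apply: sum_card_out_nbhd => u v _ _; exact: ltn_ord_tournament.
Qed.

Lemma card_front h C : #|front h C| = minn h.*2 #|C|.
Proof.
by rewrite cardsE (card_uniqP _) ?take_uniq ?enum_uniq // size_take_min cardE.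
Qed.

Lemma front_sub h C : front h C \subset C.
Proof. by apply/subsetP => z; rewrite inE => /mem_take; rewrite mem_enum. Qed.

End Algorithm.

Lemma round_cost h k l :
  2 <= h -> k <= h.*2 -> k.-1 <= l.*2 -> k * k.-1 <= ((h.*2 - 2) * l.+1).*2.
Proof. by move=> h_ge2 k_le l_ge; case: (ltnP k h.*2) => [k_lt | k_ge]; nia. Qed.

Section Correctness.

Variables (R : realType) (n : nat) (x : 'I_n -> R).
Implicit Types (C S T : {set 'I_n}).

Definition may_answer_ge (i j : 'I_n) : Prop := ~ (1 < `|x i - x j| /\ x i < x j)%R.

Lemma may_answer_ge_lb i j : may_answer_ge i j -> (x j - 1 <= x i)%R.
Proof.
move=> ok; case: (lerP (x j - 1)%R (x i)) => // lt; exfalso; apply: ok.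
by rewrite distrC ger0_norm; lra.
Qed.

Lemma run_LeafP S c T : run x (Leaf S) c T -> c = 0%N /\ T = S.
Proof. by move=> h; inversion h. Qed.

Lemma run_QueryP i j l r c T :
  run x (Query i j l r) c T ->
  exists2 c', c = c'.+1 &
    (may_answer_ge i j /\ run x l c' T) \/ (may_answer_ge j i /\ run x r c' T).
Proof.
move=> h; inversion h; subst; exists c0 => //; [left | right] => //.
by split=> //; rewrite /may_answer_ge distrC.
Qed.

Lemma run_play ps k c T :
  run x (play ps k) c T ->
  exists won c', [/\ c = (size ps + c')%N, run x (k won) c' T,
    {in won, forall p, may_answer_ge p.1 p.2} &
    {in ps, forall p, p \notin won -> may_answer_ge p.2 p.1}].
Proof.
elim: ps k c => [|p ps IH] k c /=.
  by move=> run_k; exists set0, c; split=> // p; rewrite inE.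
case/run_QueryP => c' -> [[ge run_l] | [le run_r]].
  have [won [c'' [-> run_k won_ok lost_ok]]] := IH _ _ run_l.
  exists (p |: won), c''; split=> // [q | q].
    by case/setU1P => [-> // | /won_ok].
  rewrite in_cons => /predU1P [-> | q_ps]; first by rewrite setU11.
  by rewrite in_setU1 negb_or => /andP [_ /(lost_ok _ q_ps)].
have [won [c'' [-> run_k won_ok lost_ok]]] := IH _ _ run_r.
exists won, c''; split=> // q; rewrite in_cons => /predU1P [-> // | /lost_ok]; exact.
Qed.

Lemma beats_answer (Q : {set 'I_n}) (won : {set 'I_n * 'I_n}) :
  {in won, forall p, may_answer_ge p.1 p.2} ->
  {in ordered_pairs Q, forall p, p \notin won -> may_answer_ge p.2 p.1} ->
  {in Q &, forall u v, beats won u v -> may_answer_ge u v}.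
Proof.
move=> won_ok lost_ok u v u_Q v_Q; rewrite /beats.
case: ltngtP => // [uv /won_ok // | vu]; apply: (lost_ok (v, u)).
by rewrite mem_enum inE /= u_Q v_Q.
Qed.

Definition top_in (C : {set 'I_n}) : Prop :=
  exists2 i, i \in C & forall j, (x j <= x i)%R.

Definition cover_inv (C S : {set 'I_n}) : Prop := top_in C \/ is_kmaxset x 1%R S.

Lemma top_inT : 0 < n -> top_in [set: 'I_n].
Proof.
move=> n_gt0; case: (@arg_maxP _ _ _ (Ordinal n_gt0) predT x isT) => i _ i_max.
by exists i => [|j]; [rewrite inE | apply: i_max].
Qed.

Lemma cover_inv0 S : cover_inv set0 S -> is_kmaxset x 1%R S.
Proof. by case=> // -[i]; rewrite inE. Qed.

Lemma cover_inv_step (C S : {set 'I_n}) w (L : {set 'I_n}) :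
  {in L, forall v, may_answer_ge w v} ->
  cover_inv C S -> cover_inv (C :\: (w |: L)) (w |: S).
Proof.
move=> w_beats [[i i_C i_max] | [i i_S i_max]]; last first.
  by right; exists i; rewrite // in_setU1 i_S orbT.
have [i_C' | ] := boolP (i \in C :\: (w |: L)); first by left; exists i.
rewrite inE i_C andbT negbK => /setU1P i_wL; right; exists w; first exact: setU11.
move=> j; have := i_max j; case: i_wL => [<- | /w_beats /may_answer_ge_lb]; lra.
Qed.

Lemma cover_leaf_spec h S c T :
  cover_inv set0 S -> run x (Leaf S) c T ->
  [/\ c <= (h.*2 - 2) * #|@set0 'I_n|, #|T| <= #|S| + rounds h #|@set0 'I_n|
     & is_kmaxset x 1%R T].
Proof. by move=> /cover_inv0 ok /run_LeafP [-> ->]; rewrite cards0 addn0. Qed.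

Lemma cover_loop_spec h fuel C S c T :
  2 <= h -> #|C| <= fuel -> cover_inv C S -> run x (cover_loop h fuel C S) c T ->
  [/\ c <= (h.*2 - 2) * #|C|, #|T| <= #|S| + rounds h #|C| & is_kmaxset x 1%R T].
Proof.
move=> h_ge2; elim: fuel C S c => [|f IH] C S c C_le inv /=.
  have C0 : C = set0 by apply: cards0_eq; lia.
  by move: inv; rewrite C0; apply: cover_leaf_spec.
have card_Q := card_front h C.
case: pickP => [z0 z0_Q | Q0]; last first.
  have C0 : C = set0 by apply: cards0_eq; move: card_Q; rewrite (eq_card0 Q0); lia.
  by move: inv; rewrite C0; apply: cover_leaf_spec.
case/run_play => won [c' [-> /= run_next won_ok lost_ok]].
set Q := front h C in card_Q z0_Q run_next lost_ok.
set w := [arg max_(u > z0 in Q) _] in run_next.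
set L := out_nbhd Q (beats won) w in run_next.
have [w_Q w_max] : w \in Q /\ {in Q, forall u, #|out_nbhd Q (beats won) u| <= #|L|}.
  by rewrite /L /w; case: arg_maxnP.
have L_half : #|Q|.-1 <= #|L|.*2.
  rewrite -mul2n; apply: tournament_max_outdegree => // u v _ _.
  exact: beats_tournament.
have w_L : w \notin L by rewrite inE /beats ltnn andbF.
have wL_C : w |: L \subset C.
  apply: subset_trans (front_sub h C); rewrite subUset sub1set w_Q.
  by apply/subsetP => v; rewrite inE => /andP [].
have card_next : #|C :\: (w |: L)| = #|C| - #|L|.+1.
  by rewrite cardsD (setIidPr wL_C) cardsU1 w_L.
have L_lt_C : #|L| < #|C| by have := subset_leq_card wL_C; rewrite cardsU1 w_L.
have w_beats : {in L, forall v, may_answer_ge w v}.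
  move=> v; rewrite inE => /andP [v_Q].
  exact: (beats_answer won_ok lost_ok w_Q v_Q).
have next_le : #|C :\: (w |: L)| <= f by rewrite card_next; lia.
have [cost_next size_next ok] := IH _ _ _ next_le (cover_inv_step w_beats inv) run_next.
split=> //.
- have pairs_le : size (ordered_pairs Q) <= (h.*2 - 2) * #|L|.+1.
    rewrite -(leq_pmul2l (isT : 0 < 2)) size_ordered_pairs mul2n.
    by apply: round_cost => //; rewrite card_Q geq_minl.
  by rewrite -(subnKC L_lt_C) mulnDr leq_add // -card_next.
- have next_shrink : #|C :\: (w |: L)| <= shrink h #|C|.
    by rewrite card_next /shrink -card_Q; lia.
  rewrite (@roundsE h #|C|); last lia.
  apply: (leq_trans size_next); rewrite cardsU1 [_ + #|S|]addnC -addnA leq_add2l.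
  by rewrite -add1n leq_add ?leq_b1 ?leq_rounds.
Qed.

End Correctness.

Lemma Nat_sqrt_bounds n :
  Nat.sqrt n * Nat.sqrt n <= n <= Nat.sqrt n * Nat.sqrt n + 2 * Nat.sqrt n.
Proof.
have [lb ub] := PeanoNat.Nat.sqrt_spec n (PeanoNat.Nat.le_0_l n).
by apply/andP; split; lia.
Qed.

Local Open Scope ring_scope.

Lemma ler_nat_sqrt (R : realType) (s n : nat) :
  (s * s <= n)%N -> s%:R <= Num.sqrt (n%:R : R).
Proof.
move=> s2_le; rewrite -(ger0_norm (ler0n R s)) -sqrtr_sqr.
by apply: ler_wsqrtr; rewrite -natrX ler_nat expnS expn1.
Qed.

Theorem mainTheorem5 :
  exists alg : forall n : nat, dtree n,
    forall (n : nat), (81 <= n)%N ->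
    forall (R : realType) (x : 'I_n -> R) (c : nat) (S : {set 'I_n}),
      run x (alg n) c S ->
      [/\ (c%:R : R) <= 3 * n%:R * Num.sqrt (n%:R : R),
          (#|S|%:R : R) <= Num.sqrt (n%:R : R)
        & is_kmaxset x 1 S].
Proof.
exists (fun n => cover_loop (half_block (Nat.sqrt n)) n [set: 'I_n] set0).
move=> n n_ge81 R x c S; set s := Nat.sqrt n => run_alg.
have /andP [s2_le s2_ge] := Nat_sqrt_bounds n; rewrite -/s in s2_le s2_ge.
have s_ge9 : (9 <= s)%N by nia.
have h_ge2 : (2 <= half_block s)%N by rewrite /half_block; lia.
have inv : cover_inv x [set: 'I_n] set0 by left; apply: top_inT; lia.
have card_le : (#|[set: 'I_n]| <= n)%N by rewrite cardsT card_ord.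
have [cost size ok] := cover_loop_spec h_ge2 card_le inv run_alg.
rewrite cardsT card_ord cards0 in cost size.
have sqrt_ge := ler_nat_sqrt R s2_le.
split=> //.
- have cost_le : (c <= 3 * n * s)%N by rewrite /half_block in cost; nia.
  apply: (@le_trans _ _ (3 * n * s)%N%:R); first by rewrite ler_nat.
  by rewrite !natrM ler_wpM2l ?mulr_ge0.
- apply: le_trans sqrt_ge; rewrite ler_nat (leq_trans size) //.
  by apply: rounds_half_block; rewrite ?s2_le.
Qed.
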